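(* Under the hypotheses of the previous lemma (standing assumptions, SLC and BUC, each $B_k$ nonnegative doubly stochastic scrambling with nonzero entries at least a fixed $\kappa>0$), and assuming the step sizes satisfy $\alpha_k>0$, $\alpha_{k+1}\le\alpha_k$, $\sum_k\alpha_k=\infty$ and $\sum_k\alpha_k^2<\infty$, one has $$\sum_{k=0}^\infty\alpha_k\max_J\|\delta^J_k\|<\infty,$$ where $\delta^J_k=x^J_{0,k}-\frac1S\sum_{I=1}^S x^I_{0,k}$.
   Context: Standing setup. Integers $S\ge1$ (servers), $C\ge1$ (clients), $D\ge1$, $\Delta\ge1$. $\mathcal{X}\subseteq\mathbb{R}^D$ is a nonempty convex compact set and $\mathcal{P}_{\mathcal{X}}$ is Euclidean projection onto $\mathcal{X}$. For $h=1,\dots,C$, $f_h:\mathbb{R}^D\to\mathbb{R}$ is continuously differentiable and convex with gradient $g_h$; there are constants $L_h$ with $\|g_h(x)\|\le L_h$ for all $x\in\mathcal{X}$ and constants $N_h>0$ with $\|g_h(x)-g_h(y)\|\le N_h\|x-y\|$ for all $x,y\in\mathcal{X}$. Norms are Euclidean. Weight matrices $W_{i,k}\in\mathbb{R}^{S\times C}$ ($0\le i\le\Delta-1$, $k\ge0$), entries possibly negative. Symmetric Learning Condition (SLC): there is $M>0$ with $\sum_{i=1}^{\Delta}\sum_{J=1}^S W_{i-1,k}[J,h]=M$ for all $k\ge0$ and all $h$. Bounded Update Condition (BUC): there is $\bar M>0$ with $\sum_{i=1}^{\Delta}\sum_{J=1}^S |W_{i-1,k}[J,h]|\le\bar M$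 for all $k,h$. Consensus matrices $B_k\in\mathbb{R}^{S\times S}$ have nonnegative entries. Iteration: given $x^J_{0,0}\in\mathcal{X}$ ($J=1,\dots,S$), for each $k\ge0$ and $i=1,\dots,\Delta$, $x^J_{i,k}=\mathcal{P}_{\mathcal{X}}\big[x^J_{i-1,k}-\alpha_k\sum_{h=1}^C W_{i-1,k}[J,h]\,g_h(x^J_{i-1,k})\big]$, and then $x^I_{0,k+1}=\sum_{J=1}^S B_k[I,J]\,x^J_{\Delta,k}$. A square matrix $B$ is scrambling if for every two rows $I,G$ there is a column $J$ with $B[I,J]>0$ and $B[G,J]>0$. *)

From Stdlib Require Import Reals Lra.
Open Scope R_scope.

(* Vectors of R^D are encoded as functions nat -> R; only coordinates
   0..D-1 are meaningful (norms, inner products, distances only read them). *)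
Definition vec := nat -> R.

Fixpoint vsum (n : nat) (f : nat -> R) : R :=
  match n with O => 0 | S m => vsum m f + f m end.

(* vmax n f = max (f 0, ..., f (n-1)), and 0 for n = 0 *)
Fixpoint vmax (n : nat) (f : nat -> R) : R :=
  match n with O => 0 | S O => f O | S m => Rmax (vmax m f) (f m) end.

Definition vdot (D : nat) (x y : vec) : R := vsum D (fun d => x d * y d).
Definition vnorm (D : nat) (x : vec) : R := sqrt (vdot D x x).
Definition vsub (x y : vec) : vec := fun d => x d - y d.
Definition vdist (D : nat) (x y : vec) : R := vnorm D (vsub x y).

(* X is a subset of R^D: only vectors vanishing beyond coordinate D *)
Definition in_RD (D : nat) (X : vec -> Prop) : Prop :=
  forall x, X x -> forall d, (D <= d)%nat -> x d = 0.

Definition convex_set (X : vec -> Prop) : Prop :=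
  forall x y t, X x -> X y -> 0 <= t <= 1 ->
    X (fun d => t * x d + (1 - t) * y d).

Definition closed_set (D : nat) (X : vec -> Prop) : Prop :=
  forall x, (forall d, (D <= d)%nat -> x d = 0) ->
    (forall eps, 0 < eps -> exists y, X y /\ vdist D x y < eps) -> X x.

Definition bounded_set (D : nat) (X : vec -> Prop) : Prop :=
  exists r, forall x, X x -> vnorm D x <= r.

(* compact subset of R^D (Heine-Borel) *)
Definition compact_set (D : nat) (X : vec -> Prop) : Prop :=
  in_RD D X /\ closed_set D X /\ bounded_set D X.

Definition is_projection (D : nat) (X : vec -> Prop) (P : vec -> vec) : Prop :=
  forall x, X (P x) /\ forall y, X y -> vdist D x (P x) <= vdist D x y.

Definition convex_fun (f : vec -> R) : Prop :=
  forall x y t, 0 <= t <= 1 ->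
    f (fun d => t * x d + (1 - t) * y d) <= t * f x + (1 - t) * f y.

Definition has_gradient (D : nat) (f : vec -> R) (g : vec -> vec) : Prop :=
  forall x eps, 0 < eps -> exists delta, 0 < delta /\
    forall y, vdist D y x < delta ->
      Rabs (f y - f x - vdot D (g x) (vsub y x)) <= eps * vdist D y x.

Definition continuous_vfun (D : nat) (g : vec -> vec) : Prop :=
  forall x eps, 0 < eps -> exists delta, 0 < delta /\
    forall y, vdist D y x < delta -> vdist D (g y) (g x) < eps.

(* The iteration.  W i k J h = W_{i,k}[J,h] (0-based server / client indices),
   B k I J = B_k[I,J]; g h = gradient of f_h. *)
Fixpoint x_inner (P : vec -> vec) (W : nat -> nat -> nat -> nat -> R)
  (g : nat -> vec -> vec) (alpha : nat -> R) (C : nat)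
  (y : nat -> vec) (k i : nat) : nat -> vec :=
  match i with
  | O => y
  | S i' => fun J =>
      P (fun d => x_inner P W g alpha C y k i' J d
         - alpha k * vsum C (fun h => W i' k J h * g h (x_inner P W g alpha C y k i' J) d))
  end.

(* x_iter ... k J = x^J_{0,k} *)
Fixpoint x_iter (P : vec -> vec) (W : nat -> nat -> nat -> nat -> R)
  (g : nat -> vec -> vec) (alpha : nat -> R) (B : nat -> nat -> nat -> R)
  (S C Delta : nat) (x0 : nat -> vec) (k : nat) : nat -> vec :=
  match k with
  | O => x0
  | Datatypes.S k' => fun I d =>
      vsum S (fun J => B k' I J *
        x_inner P W g alpha C (x_iter P W g alpha B S C Delta x0 k') k' Delta J d)
  end.

Definition deviation (S : nat) (xs : nat -> vec) (J : nat) : vec :=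
  fun d => xs J d - / INR S * vsum S (fun I => xs I d).

Definition scrambling (S : nat) (B : nat -> nat -> R) : Prop :=
  forall I G, (I < S)%nat -> (G < S)%nat ->
    exists J, (J < S)%nat /\ 0 < B I J /\ 0 < B G J.

(* Each inner step is a projected gradient step whose coordinates move by O(alpha_k),
   since projecting onto a set containing the current point at most doubles the move;
   averaging with a scrambling row-stochastic B_k whose positive entries are at least
   kappa shrinks the spread max_J x^J_d - min_J x^J_d of every coordinate by the factor
   1 - kappa (Dobrushin).  Hence the total spread R_k satisfies
   R_{k+1} <= (1 - kappa) R_k + c alpha_k, and as alpha is nonincreasing
   A_k := alpha_k R_k satisfies A_{k+1} <= (1 - kappa) A_k + c alpha_k^2.  Summing this
   recursion bounds sum_k A_k by sum_k alpha_k^2, and max_J |delta^J_k| <= R_k.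
   Only the gradient bounds L_h on X enter. *)

From Stdlib Require Import Reals Lra Lia Psatz FunctionalExtensionality.
Open Scope R_scope.

Lemma Rabs_le_inv x e : Rabs x <= e -> - e <= x <= e.
Proof.
  intros H. pose proof (Rle_abs x). pose proof (Rle_abs (- x)). rewrite Rabs_Ropp in *. lra.
Qed.

Lemma vsum_ext n f g : (forall j, (j < n)%nat -> f j = g j) -> vsum n f = vsum n g.
Proof.
  induction n as [|n IH]; intros H; simpl; auto.
  rewrite IH, (H n) by (auto; lia); reflexivity.
Qed.

Lemma vsum_le n f g : (forall j, (j < n)%nat -> f j <= g j) -> vsum n f <= vsum n g.
Proof.
  induction n as [|n IH]; intros H; simpl; [lra|].
  assert (vsum n f <= vsum n g) by (apply IH; intros; apply H; lia).
  specialize (H n ltac:(lia)); lra.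
Qed.

Lemma vsum_add n f g : vsum n (fun j => f j + g j) = vsum n f + vsum n g.
Proof. induction n as [|n IH]; simpl; [lra|]. rewrite IH; ring. Qed.

Lemma vsum_scal n c f : vsum n (fun j => c * f j) = c * vsum n f.
Proof. induction n as [|n IH]; simpl; [lra|]. rewrite IH; ring. Qed.

Lemma vsum_const n c : vsum n (fun _ => c) = INR n * c.
Proof. induction n as [|n IH]; simpl vsum; [simpl; lra|]. rewrite IH, S_INR; ring. Qed.

Lemma vsum_nonneg n f : (forall j, (j < n)%nat -> 0 <= f j) -> 0 <= vsum n f.
Proof.
  intros H. rewrite <- (Rmult_0_r (INR n)), <- vsum_const. now apply vsum_le.
Qed.

Lemma vsum_ge_term n f j :
  (forall i, (i < n)%nat -> 0 <= f i) -> (j < n)%nat -> f j <= vsum n f.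
Proof.
  induction n as [|n IH]; intros H Hj; simpl; [lia|].
  assert (0 <= vsum n f) by (apply vsum_nonneg; intros; apply H; lia).
  destruct (Nat.eq_dec j n) as [->|Hne]; [lra|].
  assert (f j <= vsum n f) by (apply IH; [intros; apply H|]; lia).
  specialize (H n ltac:(lia)); lra.
Qed.

Lemma vsum_le_term n f j :
  (forall i, (i < n)%nat -> f i <= 0) -> (j < n)%nat -> vsum n f <= f j.
Proof.
  intros H Hj.
  assert (Hopp : -1 * f j <= vsum n (fun i => -1 * f i)).
  { apply (vsum_ge_term n (fun i => -1 * f i)); auto.
    intros i Hi; specialize (H i Hi); lra. }
  rewrite vsum_scal in Hopp; lra.
Qed.

Lemma vsum_eq0_nonneg n f :
  (forall j, (j < n)%nat -> 0 <= f j) -> vsum n f = 0 ->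
  forall j, (j < n)%nat -> f j = 0.
Proof.
  intros H H0 j Hj. pose proof (vsum_ge_term n f j H Hj). pose proof (H j Hj). lra.
Qed.

Lemma Rabs_vsum_le n f : Rabs (vsum n f) <= vsum n (fun j => Rabs (f j)).
Proof.
  induction n as [|n IH]; simpl; [rewrite Rabs_R0; lra|].
  eapply Rle_trans; [apply Rabs_triang | lra].
Qed.

Lemma vsum_stochastic_shift n (b z : nat -> R) c :
  vsum n b = 1 -> vsum n (fun J => b J * z J) = vsum n (fun J => b J * (z J - c)) + c.
Proof.
  intros Hb.
  transitivity (vsum n (fun J => b J * (z J - c)) + c * vsum n b); [|rewrite Hb; ring].
  rewrite <- vsum_scal, <- vsum_add. apply vsum_ext; intros; ring.
Qed.

Lemma vmax_ge n f j : (j < n)%nat -> f j <= vmax n f.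
Proof.
  induction n as [|[|n] IH]; intros Hj; [lia| |].
  - replace j with 0%nat by lia; simpl; lra.
  - change (vmax (S (S n)) f) with (Rmax (vmax (S n) f) (f (S n))).
    destruct (Nat.eq_dec j (S n)) as [->|Hne]; [apply Rmax_r|].
    eapply Rle_trans; [apply IH; lia | apply Rmax_l].
Qed.

Lemma vmax_lub n f c : (1 <= n)%nat -> (forall j, (j < n)%nat -> f j <= c) -> vmax n f <= c.
Proof.
  induction n as [|[|n] IH]; intros Hn H; [lia| simpl; apply H; lia|].
  change (vmax (S (S n)) f) with (Rmax (vmax (S n) f) (f (S n))).
  apply Rmax_lub; [apply IH; [lia|intros; apply H; lia] | apply H; lia].
Qed.

Lemma vmax_attained n f : (1 <= n)%nat -> exists j, (j < n)%nat /\ vmax n f = f j.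
Proof.
  induction n as [|[|n] IH]; intros Hn; [lia| now exists 0%nat; split|].
  change (vmax (S (S n)) f) with (Rmax (vmax (S n) f) (f (S n))).
  destruct (IH ltac:(lia)) as [j [Hj E]].
  unfold Rmax; destruct (Rle_dec (vmax (S n) f) (f (S n))).
  - exists (S n); split; auto.
  - exists j; split; auto.
Qed.

Definition vmin n f := - vmax n (fun j => - f j).

Lemma vmin_le n f j : (j < n)%nat -> vmin n f <= f j.
Proof. intros Hj. pose proof (vmax_ge n (fun j => - f j) j Hj). unfold vmin; lra. Qed.

Lemma vmin_glb n f c : (1 <= n)%nat -> (forall j, (j < n)%nat -> c <= f j) -> c <= vmin n f.
Proof.
  intros Hn H. unfold vmin.
  assert (vmax n (fun j => - f j) <= - c)
    by (apply vmax_lub; auto; intros j Hj; specialize (H j Hj); lra).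
  lra.
Qed.

Lemma vmin_attained n f : (1 <= n)%nat -> exists j, (j < n)%nat /\ vmin n f = f j.
Proof.
  intros Hn. destruct (vmax_attained n (fun j => - f j) Hn) as [j [Hj E]].
  exists j; split; auto. unfold vmin; rewrite E; ring.
Qed.

Lemma mean_between_vmin_vmax n f :
  (1 <= n)%nat -> vmin n f <= / INR n * vsum n f <= vmax n f.
Proof.
  intros Hn. assert (Hpos : 0 < INR n) by (apply lt_0_INR; lia).
  assert (vsum n f <= INR n * vmax n f)
    by (rewrite <- vsum_const; apply vsum_le; intros; apply vmax_ge; auto).
  assert (INR n * vmin n f <= vsum n f)
    by (rewrite <- vsum_const; apply vsum_le; intros; apply vmin_le; auto).
  split; apply Rmult_le_reg_l with (INR n); auto;
    rewrite <- Rmult_assoc, Rinv_r by lra; lra.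
Qed.

Definition spread n f := vmax n f - vmin n f.

Lemma spread_nonneg n f : (1 <= n)%nat -> 0 <= spread n f.
Proof.
  intros Hn. pose proof (vmax_ge n f 0 ltac:(lia)). pose proof (vmin_le n f 0 ltac:(lia)).
  unfold spread; lra.
Qed.

Lemma spread_perturb n u v e :
  (1 <= n)%nat -> (forall j, (j < n)%nat -> Rabs (u j - v j) <= e) ->
  spread n u <= spread n v + 2 * e.
Proof.
  intros Hn H.
  assert (vmax n u <= vmax n v + e).
  { apply vmax_lub; auto. intros j Hj.
    pose proof (vmax_ge n v j Hj). pose proof (Rabs_le_inv _ _ (H j Hj)); lra. }
  assert (vmin n v - e <= vmin n u).
  { apply vmin_glb; auto. intros j Hj.
    pose proof (vmin_le n v j Hj). pose proof (Rabs_le_inv _ _ (H j Hj)); lra. }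
  unfold spread; lra.
Qed.

Section StochasticContraction.

Variables (n : nat) (b : nat -> nat -> R) (kappa : R).
Hypothesis b_nonneg : forall I J, (I < n)%nat -> (J < n)%nat -> 0 <= b I J.
Hypothesis b_row_sum : forall I, (I < n)%nat -> vsum n (b I) = 1.
Hypothesis b_scrambling : scrambling n b.
Hypothesis b_kappa : forall I J, (I < n)%nat -> (J < n)%nat -> b I J = 0 \/ kappa <= b I J.

(* Rows I and G share a column J0 with weight >= kappa, so the I-average lies at least
   kappa (M - z J0) below the max M and the G-average kappa (z J0 - m) above the min m. *)
Lemma row_average_diff_le (z : nat -> R) I G : (I < n)%nat -> (G < n)%nat ->
  vsum n (fun J => b I J * z J) - vsum n (fun J => b G J * z J) <= (1 - kappa) * spread n z.
Proof.
  intros HI HG. destruct (b_scrambling I G HI HG) as [J0 [HJ0 [HbI HbG]]].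
  assert (KI : kappa <= b I J0) by (destruct (b_kappa I J0 HI HJ0); lra).
  assert (KG : kappa <= b G J0) by (destruct (b_kappa G J0 HG HJ0); lra).
  set (M := vmax n z); set (m := vmin n z).
  assert (HzM : forall j, (j < n)%nat -> z j <= M) by (intros; apply vmax_ge; auto).
  assert (Hzm : forall j, (j < n)%nat -> m <= z j) by (intros; apply vmin_le; auto).
  assert (below_max : vsum n (fun J => b I J * (z J - M)) <= b I J0 * (z J0 - M)).
  { apply (vsum_le_term n (fun J => b I J * (z J - M))); auto. intros j Hj.
    pose proof (HzM j Hj). pose proof (b_nonneg I j HI Hj). nra. }
  assert (above_min : b G J0 * (z J0 - m) <= vsum n (fun J => b G J * (z J - m))).
  { apply (vsum_ge_term n (fun J => b G J * (z J - m))); auto. intros j Hj.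
    pose proof (Hzm j Hj). pose proof (b_nonneg G j HG Hj). nra. }
  pose proof (HzM J0 HJ0). pose proof (Hzm J0 HJ0).
  rewrite (vsum_stochastic_shift n (b I) z M), (vsum_stochastic_shift n (b G) z m) by auto.
  unfold spread; fold M m. nra.
Qed.

Lemma spread_stochastic_le (z : nat -> R) : (1 <= n)%nat ->
  spread n (fun I => vsum n (fun J => b I J * z J)) <= (1 - kappa) * spread n z.
Proof.
  intros Hn.
  destruct (vmax_attained n (fun I => vsum n (fun J => b I J * z J)) Hn) as [I [HI EI]].
  destruct (vmin_attained n (fun I => vsum n (fun J => b I J * z J)) Hn) as [G [HG EG]].
  unfold spread at 1; rewrite EI, EG. now apply row_average_diff_le.
Qed.

Lemma scrambling_kappa_le1 : (1 <= n)%nat -> kappa <= 1.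
Proof.
  intros Hn. destruct (b_scrambling 0%nat 0%nat Hn Hn) as [J [HJ [Hpos _]]].
  destruct (b_kappa 0%nat J Hn HJ) as [H0|Hk]; [lra|].
  pose proof (vsum_ge_term n (b 0%nat) J (fun j Hj => b_nonneg 0%nat j Hn Hj) HJ).
  rewrite b_row_sum in * by lia. lra.
Qed.

End StochasticContraction.

Lemma vnorm_le_l1 D v : vnorm D v <= vsum D (fun d => Rabs (v d)).
Proof.
  unfold vnorm, vdot.
  assert (H1 : 0 <= vsum D (fun d => Rabs (v d))) by (apply vsum_nonneg; intros; apply Rabs_pos).
  rewrite <- (sqrt_square _ H1). apply sqrt_le_1_alt. clear H1.
  induction D as [|D IH]; simpl; [lra|].
  assert (0 <= vsum D (fun d => Rabs (v d))) by (apply vsum_nonneg; intros; apply Rabs_pos).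
  assert (Rabs (v D) * Rabs (v D) = v D * v D)
    by (rewrite <- Rabs_mult; apply Rabs_right; nra).
  pose proof (Rabs_pos (v D)). nra.
Qed.

Lemma vnorm_le_coord_bound D v c :
  (forall d, (d < D)%nat -> Rabs (v d) <= c) -> vnorm D v <= INR D * c.
Proof.
  intros H. eapply Rle_trans; [apply vnorm_le_l1|].
  rewrite <- vsum_const. now apply vsum_le.
Qed.

Lemma Rabs_coord_le_vnorm D v d : (d < D)%nat -> Rabs (v d) <= vnorm D v.
Proof.
  intros Hd. unfold vnorm, vdot. rewrite <- sqrt_Rsqr_abs. apply sqrt_le_1_alt.
  apply (vsum_ge_term D (fun d => v d * v d)); auto. intros; unfold Rsqr; nra.
Qed.

(* A point of X is within [vdist D y x] of y, so P y is too; the triangle inequality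
   through y gives the factor 2. *)
Lemma projection_coord_move_le D (X : vec -> Prop) P (x y : vec) d :
  is_projection D X P -> X x -> (d < D)%nat ->
  Rabs (P y d - x d) <= 2 * vnorm D (vsub y x).
Proof.
  intros HP Hx Hd. destruct (HP y) as [_ Hmin]. specialize (Hmin x Hx). unfold vdist in Hmin.
  pose proof (Rabs_coord_le_vnorm D (vsub y (P y)) d Hd) as Hyp.
  pose proof (Rabs_coord_le_vnorm D (vsub y x) d Hd) as Hyx.
  replace (P y d - x d) with (- vsub y (P y) d + vsub y x d) by (unfold vsub; ring).
  eapply Rle_trans; [apply Rabs_triang|]. rewrite Rabs_Ropp. lra.
Qed.

Lemma convex_set_weighted_mean (X : vec -> Prop) n (b : nat -> R) (y : nat -> vec) :
  convex_set X ->
  (forall j, (j < n)%nat -> 0 <= b j) -> (forall j, (j < n)%nat -> X (y j)) -> 0 < vsum n b ->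
  X (fun d => vsum n (fun j => b j * y j d) / vsum n b).
Proof.
  intros HX. induction n as [|n IH]; intros Hb Hy Hs; simpl in Hs; [lra|].
  assert (Hs0 : 0 <= vsum n b) by (apply vsum_nonneg; intros; apply Hb; lia).
  assert (Hbn : 0 <= b n) by (apply Hb; lia).
  destruct (Req_dec (vsum n b) 0) as [E|E].
  - assert (Z : forall j, (j < n)%nat -> b j = 0)
      by (apply vsum_eq0_nonneg; auto; intros; apply Hb; lia).
    assert (Zs : forall d, vsum n (fun j => b j * y j d) = 0).
    { intros d. rewrite <- (Rmult_0_r (INR n)), <- vsum_const.
      apply vsum_ext; intros j Hj; rewrite Z; auto; ring. }
    replace (fun d => vsum (S n) (fun j => b j * y j d) / vsum (S n) b) with (y n)
      by (apply functional_extensionality; intros d; simpl; rewrite Zs, E; field; lra).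
    apply Hy; lia.
  - assert (Xn : X (fun d => vsum n (fun j => b j * y j d) / vsum n b))
      by (apply IH; [intros; apply Hb|intros; apply Hy|]; lia || lra).
    set (t := vsum n b / (vsum n b + b n)).
    assert (Ht : 0 <= t <= 1).
    { unfold t; split; [apply Rmult_le_pos; auto; left; apply Rinv_0_lt_compat; lra|].
      apply Rmult_le_reg_r with (vsum n b + b n); [lra|]. field_simplify; lra. }
    replace (fun d => vsum (S n) (fun j => b j * y j d) / vsum (S n) b)
      with (fun d => t * (vsum n (fun j => b j * y j d) / vsum n b) + (1 - t) * y n d)
      by (apply functional_extensionality; intros d; simpl; unfold t; field; lra).
    apply HX; auto.
Qed.

Lemma series_cv_of_bounded_partial_sums (a : nat -> R) M :
  (forall k, 0 <= a k) -> (forall n, sum_f_R0 a n <= M) -> exists l, Un_cv (sum_f_R0 a) l.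
Proof.
  intros Ha HM.
  assert (Hgrow : Un_growing (sum_f_R0 a))
    by (intros n; rewrite tech5; pose proof (Ha (S n)); lra).
  destruct (growing_cv _ Hgrow) as [l Hl]; [exists M; intros x [n ->]; apply HM|].
  now exists l.
Qed.

Lemma partial_sums_contractive_le (a b : nat -> R) rho Bb :
  0 <= rho < 1 -> (forall k, 0 <= a k) -> (forall k, a (S k) <= rho * a k + b k) ->
  (forall n, sum_f_R0 b n <= Bb) ->
  forall n, sum_f_R0 a n <= (a 0%nat + Bb) / (1 - rho).
Proof.
  intros Hrho Ha Hrec Hb n.
  assert (Hshift : sum_f_R0 a (S n) <= a 0%nat + rho * sum_f_R0 a n + sum_f_R0 b n).
  { rewrite decomp_sum by lia; simpl pred.
    rewrite Rplus_assoc, (scal_sum a n rho), <- sum_plus.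
    apply Rplus_le_compat_l, sum_Rle; intros k _. rewrite Rmult_comm. apply Hrec. }
  assert (Hmono : sum_f_R0 a n <= sum_f_R0 a (S n)) by (rewrite tech5; pose proof (Ha (S n)); lra).
  pose proof (Hb n).
  apply Rmult_le_reg_l with (1 - rho); [lra|].
  replace ((1 - rho) * ((a 0%nat + Bb) / (1 - rho))) with (a 0%nat + Bb) by (field; lra).
  assert (rho * sum_f_R0 a n <= rho * sum_f_R0 a (S n)) by (apply Rmult_le_compat_l; lra).
  nra.
Qed.

Section Iteration.

Variables (S C D Delta : nat) (X : vec -> Prop) (P : vec -> vec) (g : nat -> vec -> vec)
  (L : nat -> R) (W : nat -> nat -> nat -> nat -> R) (B : nat -> nat -> nat -> R)
  (alpha : nat -> R) (x0 : nat -> vec) (kappa Mb : R).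

Hypothesis HS : (1 <= S)%nat.
Hypothesis HXconv : convex_set X.
Hypothesis HP : is_projection D X P.
Hypothesis HL : forall h x, (h < C)%nat -> X x -> vnorm D (g h x) <= L h.
Hypothesis Hx0 : forall J, (J < S)%nat -> X (x0 J).
Hypothesis HMb : 0 < Mb.
Hypothesis HBUC : forall k h, (h < C)%nat ->
  vsum Delta (fun i => vsum S (fun J => Rabs (W i k J h))) <= Mb.
Hypothesis Hkappa : 0 < kappa.
Hypothesis HBnn : forall k I J, (I < S)%nat -> (J < S)%nat -> 0 <= B k I J.
Hypothesis HBrow : forall k I, (I < S)%nat -> vsum S (fun J => B k I J) = 1.
Hypothesis HBscr : forall k, scrambling S (B k).
Hypothesis HBkappa : forall k I J, (I < S)%nat -> (J < S)%nat -> B k I J = 0 \/ kappa <= B k I J.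
Hypothesis Hapos : forall k, 0 < alpha k.
Hypothesis Hadec : forall k, alpha (Datatypes.S k) <= alpha k.

Local Notation xi := (x_iter P W g alpha B S C Delta x0).
Local Notation inner := (x_inner P W g alpha C).

Let grad_bound := vsum C (fun h => Mb * L h).
Let step_move k := 2 * (alpha k * (INR D * grad_bound)).

Lemma grad_bound_nonneg : 0 <= grad_bound.
Proof.
  apply vsum_nonneg; intros h Hh. apply Rmult_le_pos; [lra|].
  eapply Rle_trans; [apply sqrt_pos | apply (HL h (x0 0%nat) Hh), Hx0; lia].
Qed.

Lemma weight_abs_le k i J h : (i < Delta)%nat -> (J < S)%nat -> (h < C)%nat ->
  Rabs (W i k J h) <= Mb.
Proof.
  intros Hi HJ Hh. eapply Rle_trans; [|apply (HBUC k h Hh)].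
  eapply Rle_trans;
    [|apply (vsum_ge_term Delta (fun i => vsum S (fun J => Rabs (W i k J h))) i); auto].
  - apply (vsum_ge_term S (fun J => Rabs (W i k J h)) J); auto. intros; apply Rabs_pos.
  - intros; apply vsum_nonneg; intros; apply Rabs_pos.
Qed.

Lemma client_update_coord_le k i J z d :
  (i < Delta)%nat -> (J < S)%nat -> X z -> (d < D)%nat ->
  Rabs (vsum C (fun h => W i k J h * g h z d)) <= grad_bound.
Proof.
  intros Hi HJ Hz Hd. eapply Rle_trans; [apply Rabs_vsum_le|].
  apply vsum_le; intros h Hh. rewrite Rabs_mult.
  apply Rmult_le_compat; try apply Rabs_pos; [now apply weight_abs_le|].
  eapply Rle_trans; [apply (Rabs_coord_le_vnorm D (g h z) d Hd) | now apply HL].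
Qed.

Lemma x_inner_drift k (y : nat -> vec) : (forall J, (J < S)%nat -> X (y J)) ->
  forall i, (i <= Delta)%nat -> forall J, (J < S)%nat ->
  X (inner y k i J) /\
  forall d, (d < D)%nat -> Rabs (inner y k i J d - y J d) <= INR i * step_move k.
Proof.
  intros Hy. induction i as [|i IH]; intros Hi J HJ.
  - split; auto. intros d _. simpl; rewrite Rminus_diag, Rabs_R0; lra.
  - destruct (IH ltac:(lia) J HJ) as [HX Hdrift]. split; [apply (HP _)|].
    intros d Hd. cbn [x_inner].
    set (x := inner y k i J).
    set (x' := fun d => x d - alpha k * vsum C (fun h => W i k J h * g h x d)).
    assert (Hmove : vnorm D (vsub x' x) <= alpha k * (INR D * grad_bound)).
    { rewrite Rmult_comm, Rmult_assoc. apply vnorm_le_coord_bound. intros d' Hd'.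
      unfold vsub, x'. replace (_ - _ - x d') with (- (alpha k * vsum C (fun h => W i k J h * g h x d')))
        by ring.
      rewrite Rabs_Ropp, Rabs_mult, (Rabs_right (alpha k)) by (pose proof (Hapos k); lra).
      rewrite Rmult_comm. apply Rmult_le_compat_r; [pose proof (Hapos k); lra|].
      apply client_update_coord_le; auto; lia. }
    pose proof (projection_coord_move_le D X P x x' d HP HX Hd).
    specialize (Hdrift d Hd). fold x in Hdrift. rewrite S_INR.
    replace (P x' d - y J d) with ((P x' d - x d) + (x d - y J d)) by ring.
    eapply Rle_trans; [apply Rabs_triang|]. unfold step_move in *. lra.
Qed.

Lemma x_iter_in_X k J : (J < S)%nat -> X (xi k J).
Proof.
  revert J; induction k as [|k IH]; intros J HJ; [now apply Hx0|].
  pose proof (x_inner_drift k (xi k) IH Delta (le_n _)) as Hinner.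
  pose proof (convex_set_weighted_mean X S (B k J) (inner (xi k) k Delta) HXconv
    (fun j Hj => HBnn k J j HJ Hj) (fun j Hj => proj1 (Hinner j Hj))) as Hmean.
  assert (Hrow : vsum S (B k J) = 1) by exact (HBrow k J HJ).
  rewrite Hrow in Hmean.
  replace (xi (Datatypes.S k) J) with (fun d => vsum S (fun j => B k J j * inner (xi k) k Delta j d) / 1)
    by (apply functional_extensionality; intros d; simpl; field).
  apply Hmean; lra.
Qed.

Lemma kappa_le1 : kappa <= 1.
Proof. exact (scrambling_kappa_le1 S (B 0%nat) kappa (HBnn 0) (HBrow 0) (HBscr 0) (HBkappa 0) HS). Qed.

Let coord_spread k d := spread S (fun J => xi k J d).

Lemma coord_spread_succ_le k d : (d < D)%nat ->
  coord_spread (Datatypes.S k) d <= (1 - kappa) * (coord_spread k d + 2 * (INR Delta * step_move k)).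
Proof.
  intros Hd. unfold coord_spread. cbn [x_iter].
  pose proof (x_inner_drift k (xi k) (fun J HJ => x_iter_in_X k J HJ) Delta (le_n _)) as Hinner.
  eapply Rle_trans;
    [apply (spread_stochastic_le S (B k) kappa (HBnn k) (HBrow k) (HBscr k) (HBkappa k)
      (fun J => inner (xi k) k Delta J d) HS)|].
  apply Rmult_le_compat_l; [pose proof kappa_le1; lra|].
  apply spread_perturb; auto. intros J HJ. exact (proj2 (Hinner J HJ) d Hd).
Qed.

Let total_spread k := vsum D (coord_spread k).
Let consensus_const := (1 - kappa) * INR D * (4 * INR Delta * INR D * grad_bound).

Lemma total_spread_nonneg k : 0 <= total_spread k.
Proof. apply vsum_nonneg; intros; now apply spread_nonneg. Qed.

Lemma total_spread_succ_le k :
  total_spread (Datatypes.S k) <= (1 - kappa) * total_spread k + consensus_const * alpha k.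
Proof.
  unfold total_spread. eapply Rle_trans; [apply vsum_le; intros d; apply coord_spread_succ_le|].
  rewrite vsum_scal, vsum_add, vsum_const. unfold consensus_const, step_move. right; ring.
Qed.

Lemma deviation_le_total_spread k J : (J < S)%nat ->
  vnorm D (deviation S (xi k) J) <= total_spread k.
Proof.
  intros HJ. eapply Rle_trans; [apply vnorm_le_l1|]. apply vsum_le; intros d Hd.
  pose proof (mean_between_vmin_vmax S (fun I => xi k I d) HS).
  pose proof (vmax_ge S (fun I => xi k I d) J HJ). pose proof (vmin_le S (fun I => xi k I d) J HJ).
  unfold deviation, coord_spread, spread. apply Rabs_le. lra.
Qed.

Lemma weighted_deviation_series_cv :
  (exists l, Un_cv (fun n => sum_f_R0 (fun k => alpha k ^ 2) n) l) ->
  exists l, Un_cv (fun n => sum_f_R0 (fun k => alpha k *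
    vmax S (fun J => vnorm D (deviation S (xi k) J))) n) l.
Proof.
  intros [l Hl].
  set (A k := alpha k * total_spread k).
  assert (HA0 : forall k, 0 <= A k)
    by (intros k; apply Rmult_le_pos; [pose proof (Hapos k); lra | apply total_spread_nonneg]).
  assert (HA : forall k, A (Datatypes.S k) <= (1 - kappa) * A k + alpha k ^ 2 * consensus_const).
  { intros k. unfold A. pose proof (Hadec k). pose proof (Hapos k).
    pose proof (total_spread_nonneg (Datatypes.S k)). pose proof (total_spread_succ_le k).
    assert (alpha (Datatypes.S k) * total_spread (Datatypes.S k) <= alpha k * total_spread (Datatypes.S k))
      by (apply Rmult_le_compat_r; lra).
    nra. }
  assert (Hcc : 0 <= consensus_const).
  { pose proof kappa_le1. pose proof grad_bound_nonneg. pose proof (pos_INR D). pose proof (pos_INR Delta).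
    unfold consensus_const. repeat apply Rmult_le_pos; lra. }
  assert (Hsq : forall n, sum_f_R0 (fun k => alpha k ^ 2 * consensus_const) n <= l * consensus_const).
  { intros n. rewrite <- scal_sum, Rmult_comm. apply Rmult_le_compat_r; auto.
    apply (growing_ineq _ _); auto.
    intros m; rewrite tech5; pose proof (pow2_ge_0 (alpha (Datatypes.S m))); lra. }
  pose proof (partial_sums_contractive_le A _ (1 - kappa) _ ltac:(pose proof kappa_le1; lra) HA0 HA Hsq)
    as HAsum.
  apply (series_cv_of_bounded_partial_sums _ ((A 0%nat + l * consensus_const) / (1 - (1 - kappa)))).
  - intros k. apply Rmult_le_pos; [pose proof (Hapos k); lra|].
    eapply Rle_trans; [|apply (vmax_ge S _ 0%nat); lia]. apply sqrt_pos.
  - intros n. eapply Rle_trans; [|apply (HAsum n)]. apply sum_Rle; intros k _.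
    apply Rmult_le_compat_l; [pose proof (Hapos k); lra|].
    apply vmax_lub; auto. intros J HJ. now apply deviation_le_total_spread.
Qed.

End Iteration.

Theorem mainTheorem4
  (S C D Delta : nat) (HS : (1 <= S)%nat) (HC : (1 <= C)%nat)
  (HD : (1 <= D)%nat) (HDelta : (1 <= Delta)%nat)
  (X : vec -> Prop) (P : vec -> vec)
  (f : nat -> vec -> R) (g : nat -> vec -> vec) (L N : nat -> R)
  (W : nat -> nat -> nat -> nat -> R) (B : nat -> nat -> nat -> R)
  (alpha : nat -> R) (x0 : nat -> vec) (kappa : R)
  (HXne : exists x, X x) (HXconv : convex_set X) (HXcomp : compact_set D X)
  (HP : is_projection D X P)
  (Hfconv : forall h, (h < C)%nat -> convex_fun (f h))
  (Hgrad : forall h, (h < C)%nat -> has_gradient D (f h) (g h))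
  (Hgcont : forall h, (h < C)%nat -> continuous_vfun D (g h))
  (HL : forall h x, (h < C)%nat -> X x -> vnorm D (g h x) <= L h)
  (HNpos : forall h, (h < C)%nat -> 0 < N h)
  (HN : forall h x y, (h < C)%nat -> X x -> X y ->
          vdist D (g h x) (g h y) <= N h * vdist D x y)
  (Hx0 : forall J, (J < S)%nat -> X (x0 J))
  (* SLC *)
  (HSLC : exists M, 0 < M /\ forall k h, (h < C)%nat ->
            vsum Delta (fun i => vsum S (fun J => W i k J h)) = M)
  (* BUC *)
  (HBUC : exists Mb, 0 < Mb /\ forall k h, (h < C)%nat ->
            vsum Delta (fun i => vsum S (fun J => Rabs (W i k J h))) <= Mb)
  (Hkappa : 0 < kappa)
  (HBnn : forall k I J, (I < S)%nat -> (J < S)%nat -> 0 <= B k I J)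
  (HBrow : forall k I, (I < S)%nat -> vsum S (fun J => B k I J) = 1)
  (HBcol : forall k J, (J < S)%nat -> vsum S (fun I => B k I J) = 1)
  (HBscr : forall k, scrambling S (B k))
  (HBkappa : forall k I J, (I < S)%nat -> (J < S)%nat ->
             B k I J = 0 \/ kappa <= B k I J)
  (Hapos : forall k, 0 < alpha k)
  (Hadec : forall k, alpha (Datatypes.S k) <= alpha k)
  (Hadiv : cv_infty (fun n => sum_f_R0 alpha n))
  (Hasq : exists l, Un_cv (fun n => sum_f_R0 (fun k => alpha k ^ 2) n) l) :
  exists l, Un_cv (fun n => sum_f_R0 (fun k => alpha k *
      vmax S (fun J => vnorm D
        (deviation S (x_iter P W g alpha B S C Delta x0 k) J))) n) l.
Proof.
  destruct HBUC as [Mb [HMb HBUC_Mb]].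
  exact (weighted_deviation_series_cv S C D Delta X P g L W B alpha x0 kappa Mb
    HS HXconv HP HL Hx0 HMb HBUC_Mb Hkappa HBnn HBrow HBscr HBkappa Hapos Hadec Hasq).
Qed.
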